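(* Let $I=\{1,2\}$, $A=\{x,y,z\}$ with $x,y,z$ pairwise distinct, and let $\mathcal C=\mathcal C(I,A,(\rho_i)_{i\in I},(C^a)_{a\in A})$ be a Cartan scheme with $\rho_1(x)=y$, $\rho_1(y)=x$, $\rho_1(z)=z$, $\rho_2(x)=x$, $\rho_2(y)=z$, $\rho_2(z)=y$. Let $a,b,c,d\in\mathbb N_0$ with $a\le d$ such that $C^x=\begin{pmatrix}2&-a\\-c&2\end{pmatrix}$, $C^y=\begin{pmatrix}2&-a\\-d&2\end{pmatrix}$, $C^z=\begin{pmatrix}2&-b\\-d&2\end{pmatrix}$, and let $\mathcal R=\mathcal R(\mathcal C,(R^a)_{a\in A})$ be a root system of type $\mathcal C$. If $\mathcal R$ is finite, then $(a,b,c,d)$ and $R^x$ satisfy one of: (1) $(a,b,c,d)=(1,1,1,1)$, $|R^x_+|=3$; (2) $(1,1,3,3)$, $|R^x_+|=6$; (3) $(1,2,4,2)$, $|R^x_+|=6$; (4) $(1,3,6,2)$, $|R^x_+|=12$; (5) $(1,4,5,2)$, $|R^x_+|=12$; (6) $(1,3,7,2)$, $|R^x_+|=18$; (7) $(1,5,5,2)$, $|R^x_+|=18$. Conversely, if $(a,b,c,d)$ is one of these seven quadruples, then $\mathcal R$ is finite.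
   Context: Let $I$ be a nonempty finite set and $\{\alpha_i\mid i\in I\}$ the standard basis of $\mathbb Z^I$; $\mathbb N_0=\{0,1,2,\dots\}$. A generalized Cartan matrix is $C=(c_{ij})_{i,j\in I}\in\mathbb Z^{I\times I}$ with $c_{ii}=2$, $c_{jk}\le0$ for $j\ne k$, and $c_{ij}=0\Rightarrow c_{ji}=0$. A Cartan scheme $\mathcal C=\mathcal C(I,A,(\rho_i)_{i\in I},(C^a)_{a\in A})$ consists of a nonempty set $A$, maps $\rho_i:A\to A$ and generalized Cartan matrices $C^a=(c^a_{jk})_{j,k\in I}$ such that (C1) $\rho_i^2=\mathrm{id}$ and (C2) $c^a_{ij}=c^{\rho_i(a)}_{ij}$ for all $a\in A$, $i,j\in I$. For $i\in I$, $a\in A$ let $\sigma_i^a\in\mathrm{Aut}(\mathbb Z^I)$, $\sigma_i^a(\alpha_j)=\alpha_j-c^a_{ij}\alpha_i$. A root system of type $\mathcal C$ is a family $\mathcal R=\mathcal R(\mathcal C,(R^a)_{a\in A})$ of subsets $R^a\subset\mathbb Z^I$ such that, writing $R^a_+=R^a\cap\mathbb N_0^I$ and $m^a_{i,j}=|R^a\cap(\mathbb N_0\alpha_i+\mathbb N_0\alpha_j)|$, for all $a\in A$, $i,j\in I$: (R1) $R^a=R^a_+\cup(-R^a_+)$; (R2) $R^a\cap\mathbb Z\alpha_i=\{\alpha_i,-\alpha_i\}$; (R3) $\sigma_i^a(R^a)=R^{\rho_i(a)}$; (R4) if $i\neq j$ and $m^a_{i,j}$ is finite then $(\rho_i\rho_j)^{m^a_{i,j}}(a)=a$.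 It is finite if every $R^a$ is finite. *)

From mathcomp Require Import all_boot all_order all_algebra.
Set Implicit Arguments. Unset Strict Implicit. Unset Printing Implicit Defensive.
Import Order.TTheory GRing.Theory Num.Theory.
Local Open Scope ring_scope.

Section CartanDefs.
Variable I : finType.
Variable A : Type.

Definition vec := {ffun I -> int}.

Definition alpha (i : I) : vec := [ffun j => ((j == i) : nat)%:Z].

Definition vopp (v : vec) : vec := [ffun j => - v j].

Definition nonneg (v : vec) : Prop := forall j, 0 <= v j.

Definition gen_cartan (M : I -> I -> int) : Prop :=
  (forall i, M i i = 2) /\
  (forall j k, j != k -> M j k <= 0) /\
  (forall i j, M i j = 0 -> M j i = 0).

Definition cartan_scheme (rho : I -> A -> A) (C : A -> I -> I -> int) : Prop :=
  (exists a : A, True) /\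
  (forall a, gen_cartan (C a)) /\
  (forall i a, rho i (rho i a) = a) /\
  (forall a i j, C a i j = C (rho i a) i j).

(* sigma_i^a (alpha_j) = alpha_j - c^a_{ij} alpha_i, extended linearly *)
Definition sigma (C : A -> I -> I -> int) (a : A) (i : I) (v : vec) : vec :=
  [ffun k => v k - (if k == i then \sum_(j : I) C a i j * v j else 0)].

Definition card_is (P : vec -> Prop) (n : nat) : Prop :=
  exists s : seq vec, [/\ uniq s, (forall v, v \in s <-> P v) & size s = n].

Definition in_cone (i j : I) (v : vec) : Prop :=
  exists p q : nat, v = [ffun k => p%:Z * alpha i k + q%:Z * alpha j k].

Definition root_system (rho : I -> A -> A) (C : A -> I -> I -> int)
    (R : A -> vec -> Prop) : Prop :=
  (forall a v, R a v <-> ((R a v /\ nonneg v) \/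
                          (R a (vopp v) /\ nonneg (vopp v)))) /\
  (forall a i v, (exists k : int, v = [ffun l => k * alpha i l]) ->
       (R a v <-> (v = alpha i \/ v = vopp (alpha i)))) /\
  (forall a i v, R (rho i a) v <-> exists2 w, R a w & sigma C a i w = v) /\
  (forall a i j (m : nat), i != j ->
       card_is (fun v => R a v /\ in_cone i j v) m ->
       iter m (fun b => rho i (rho j b)) a = a).

Definition root_system_finite (R : A -> vec -> Prop) : Prop :=
  forall a, exists s : seq vec, forall v, R a v <-> v \in s.

End CartanDefs.

(* the 2x2 matrix [[2, -p], [-q, 2]] indexed by 'I_2 (index 0 = "1", 1 = "2") *)
Definition cm2 (p q : nat) : 'I_2 -> 'I_2 -> int :=
  fun i j => if i == j then 2%:Z
             else if val i == 0%N then - (p%:Z) else - (q%:Z).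

From mathcomp Require Import all_boot all_order all_algebra.
From mathcomp Require Import zify ring.
Set Implicit Arguments. Unset Strict Implicit. Unset Printing Implicit Defensive.
Import Order.TTheory GRing.Theory Num.Theory.
Local Open Scope ring_scope.

(* Every root is positive or negative, +-alpha_i are the only roots on the axes,
   and s_i keeps every positive root other than alpha_i positive. Hence, if a
   product of n alternating simple reflections starting at an object sends both
   simple roots to negative vectors, the positive roots there are exactly the n
   roots alpha_i, s_i alpha_j, s_i s_j alpha_i, ...; for the seven listed
   quadruples this happens at x, y and z, which gives finiteness and |R^x_+|.
   Every other quadruple meets one of three obstructions: such a product yields
   a root whose coordinates have opposite signs; the number of positive roots
   contradicts (R4), rho_1 rho_2 having order 3 on {x, y, z}; or the product of
   the six reflections along the closed path at x has determinant 1, trace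
   t >= 2 and top-left entry >= 2, so that the first coordinates of its iterates
   on alpha_1 satisfy u_(k+2) = t u_(k+1) - u_k and grow, producing infinitely
   many roots at x. *)


Definition lincomb (p q : int) (u w : int * int) : int * int :=
  (p * u.1 + q * w.1, p * u.2 + q * w.2).

Lemma lincomb_basis (v : int * int) : v = lincomb v.1 v.2 (1, 0) (0, 1).
Proof. by case: v => p q; rewrite /lincomb /=; congr pair; ring. Qed.

Definition det2 (u w : int * int) : int := u.1 * w.2 - u.2 * w.1.

Lemma cayley_hamilton2 (f : int * int -> int * int) :
  (forall v, f v = lincomb v.1 v.2 (f (1, 0)) (f (0, 1))) ->
  det2 (f (1, 0)) (f (0, 1)) = 1 ->
  forall v, f (f v) = lincomb ((f (1, 0)).1 + (f (0, 1)).2) (-1) (f v) v.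
Proof.
move=> f_lin det1 v; rewrite f_lin [f v]f_lin.
move: det1; rewrite /det2 /lincomb; case: (f (1, 0)) (f (0, 1)) => [f11 f12] [f21 f22] /= det1.
by case: v => p q /=; rewrite -det1; congr pair; ring.
Qed.

Lemma recurrence_increasing (t : int) (u : nat -> int) :
  2 <= t -> 0 <= u 0%N -> u 0%N < u 1%N -> (forall j, u j.+2 = t * u j.+1 - u j) ->
  forall j, u j < u j.+1.
Proof.
move=> t_ge2 u0_ge0 u01 u_rec j.
suff [] : 0 <= u j /\ u j < u j.+1 by [].
elim: j => [|j [uj_ge0 uj_lt]] //; rewrite u_rec; split; nia.
Qed.

Lemma no_injection_into_seq (T : eqType) (u : nat -> T) (s : seq T) :
  injective u -> ~ (forall j, u j \in s).
Proof.
move=> u_inj u_in; have u_uniq : uniq (map u (iota 0 (size s).+1)).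
  by rewrite map_inj_uniq ?iota_uniq.
suff : ((size s).+1 <= size s)%N by rewrite ltnn.
rewrite -{1}(size_iota 0 (size s).+1) -(size_map u).
by apply: uniq_leq_size u_uniq _ => _ /mapP [j _ ->].
Qed.

Lemma increasing_inj (u : nat -> int) : (forall j, u j < u j.+1) -> injective u.
Proof.
move=> u_incr i j uij; have mono := homo_ltn lt_trans u_incr.
by case: (ltngtP i j) => // /mono; rewrite uij ltxx.
Qed.

Inductive obj := Ox | Oy | Oz.

Definition rho3 (i : bool) (o : obj) : obj :=
  match i, o with
  | false, Ox => Oy | false, Oy => Ox | false, Oz => Oz
  | true, Ox => Ox | true, Oy => Oz | true, Oz => Oy
  end.

Lemma rho3K i : involutive (rho3 i).
Proof. by case: i => -[]. Qed.

Fixpoint walk_obj (o : obj) (i : bool) (n : nat) : obj :=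
  if n is n'.+1 then walk_obj (rho3 i o) (~~ i) n' else o.

(* [cartan_off a b c d o i] is the entry [- c^o_{i,j}], j <> i, of the Cartan
   matrix at [o]; the index [false] stands for 1 and [true] for 2. *)
Definition cartan_off (a b c d : nat) (o : obj) (i : bool) : int :=
  match o, i with
  | Ox, false => a | Ox, true => c | Oy, false => a | Oy, true => d
  | Oz, false => b | Oz, true => d
  end.

Lemma cartan_off_rho3 a b c d i o :
  cartan_off a b c d (rho3 i o) i = cartan_off a b c d o i.
Proof. by case: i; case: o. Qed.

Section Walks.
Variable m : obj -> bool -> int.

Definition simple (i : bool) : int * int := if i then (0, 1) else (1, 0).

Definition sref (o : obj) (i : bool) (v : int * int) : int * int :=
  if i then (v.1, m o i * v.1 - v.2) else (m o i * v.2 - v.1, v.2).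

Fixpoint walk (o : obj) (i : bool) (n : nat) (v : int * int) : int * int :=
  if n is n'.+1 then walk (rho3 i o) (~~ i) n' (sref o i v) else v.

Fixpoint chain (o : obj) (i : bool) (n : nat) : seq (int * int) :=
  if n is n'.+1 then simple i :: map (sref o i) (chain (rho3 i o) (~~ i) n')
  else [::].

Lemma srefK o i : involutive (sref o i).
Proof. by case=> p q; case: i; rewrite /sref /=; congr pair; ring. Qed.

Lemma sref_lincomb o i p q u w :
  sref o i (lincomb p q u w) = lincomb p q (sref o i u) (sref o i w).
Proof. by case: i; rewrite /sref /lincomb /=; congr pair; ring. Qed.

Lemma walk_lincomb o i n p q u w :
  walk o i n (lincomb p q u w) = lincomb p q (walk o i n u) (walk o i n w).
Proof. by elim: n o i u w => [|n IH] o i u w //=; rewrite sref_lincomb IH. Qed.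

Lemma walk_linear o i n v :
  walk o i n v = lincomb v.1 v.2 (walk o i n (1, 0)) (walk o i n (0, 1)).
Proof. by rewrite {1}[v]lincomb_basis walk_lincomb. Qed.

Lemma walk_det o i n u w :
  det2 (walk o i n u) (walk o i n w) = (-1) ^+ n * det2 u w.
Proof.
elim: n o i u w => [|n IH] o i u w /=; first by rewrite expr0 mul1r.
by rewrite IH exprS /det2 /sref; case: i => /=; ring.
Qed.

Definition nonnegb (v : int * int) : bool := (0 <= v.1) && (0 <= v.2).
Definition nonposb (v : int * int) : bool := (v.1 <= 0) && (v.2 <= 0).

Definition walk_negative (o : obj) (i : bool) (n : nat) : bool :=
  nonposb (walk o i n (1, 0)) && nonposb (walk o i n (0, 1)).

Definition positive_chain (o : obj) (i : bool) (n : nat) : bool :=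
  [&& walk_negative o i n, all nonnegb (chain o i n) & uniq (chain o i n)].

End Walks.

(* The product of the simple reflections along the closed path
   x -2-> x -1-> y -2-> z -1-> z -2-> y -1-> x. *)
Definition coxeter (a b c d : nat) : int * int -> int * int :=
  walk (cartan_off a b c d) Ox true 6.

Definition cox_trace (a b c d : int) : int :=
  c * (a * ((a * d - 2) * (b * d - 2) - 2) + b) - 2 * ((a * d - 1) * (b * d - 2)) + 2.

Lemma coxeter_traceE a b c d :
  (coxeter a b c d (1, 0)).1 + (coxeter a b c d (0, 1)).2 = cox_trace a b c d.
Proof. by rewrite /cox_trace /coxeter /= /sref /=; ring. Qed.

Lemma coxeter22 a b c d :
  (coxeter a b c d (0, 1)).2 = 1 - (a%:Z * d - 1) * (b%:Z * d - 2).
Proof. by rewrite /coxeter /= /sref /=; ring. Qed.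

Lemma coxeter_det a b c d :
  det2 (coxeter a b c d (1, 0)) (coxeter a b c d (0, 1)) = 1.
Proof. by rewrite /coxeter walk_det /det2 /=; ring. Qed.

Lemma cox_trace_a_ge3 (a b c d : int) :
  3 <= a -> a <= d -> 1 <= b -> 1 <= c -> 2 <= cox_trace a b c d.
Proof.
move=> a_ge3 ad b_ge1 c_ge1; rewrite /cox_trace.
have X_ge9 : 9 <= a * d by nia.
have Y_ge3 : 3 <= b * d by nia.
have X_ge3a : 3 * a <= a * d by nia.
move: (a * d) (b * d) X_ge9 Y_ge3 X_ge3a => X Y X_ge9 Y_ge3 X_ge3a.
have -> : (X - 1) * (Y - 2) = (X - 2) * (Y - 2) + (Y - 2) by ring.
have W_ge : 7 * (Y - 2) <= (X - 2) * (Y - 2) by nia.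
have W_ge2 : 0 <= (X - 2) * (Y - 2) - 2 by nia.
move: ((X - 2) * (Y - 2)) W_ge W_ge2 => W W_ge W_ge2.
have Q_ge : 3 * (W - 2) <= a * (W - 2) by nia.
move: (a * (W - 2)) Q_ge => Q Q_ge.
have : Q + b <= c * (Q + b) by nia.
lia.
Qed.

Lemma cox_trace_a2 (b c d : int) :
  2 <= b -> 2 <= d -> 2 <= c -> 2 <= cox_trace 2 b c d.
Proof.
move=> b_ge2 d_ge2 c_ge2; rewrite /cox_trace.
have Y_ge4 : 4 <= b * d by nia.
have W_ge : 2 * (b * d - 2) <= (2 * d - 2) * (b * d - 2) by nia.
have -> : (2 * d - 1) * (b * d - 2) = (2 * d - 2) * (b * d - 2) + (b * d - 2) by ring.
move: (b * d) ((2 * d - 2) * (b * d - 2)) Y_ge4 W_ge => Y W Y_ge4 W_ge.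
have : 2 * (2 * (W - 2) + b) <= c * (2 * (W - 2) + b) by nia.
lia.
Qed.

Lemma cox_trace_a2_b1 (c d : int) : 3 <= d -> 2 <= c -> 2 <= cox_trace 2 1 c d.
Proof.
move=> d_ge3 c_ge2; rewrite /cox_trace.
have W_ge : 4 * (d - 2) <= (2 * d - 2) * (1 * d - 2) by nia.
have -> : (2 * d - 1) * (1 * d - 2) = (2 * d - 2) * (1 * d - 2) + (d - 2) by ring.
move: ((2 * d - 2) * (1 * d - 2)) W_ge => W W_ge.
have : 2 * (2 * (W - 2) + 1) <= c * (2 * (W - 2) + 1) by nia.
lia.
Qed.

Lemma cox_trace_a1_d2 (b c : int) : 4 <= (b - 2) * (c - 4) -> 2 <= cox_trace 1 b c 2.
Proof.
have -> : cox_trace 1 b c 2 = (b - 2) * (c - 4) - 2 by rewrite /cox_trace; ring.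
lia.
Qed.

Lemma cox_trace_a1_d3 (b c : int) : 2 <= b -> 4 <= c -> 2 <= cox_trace 1 b c 3.
Proof.
have -> : cox_trace 1 b c 3 = 4 * ((b - 1) * (c - 3)) - 2 by rewrite /cox_trace; ring.
by move=> *; nia.
Qed.

Lemma cox_trace_a1_d4 (b c : int) :
  1 <= b -> 3 <= c -> 2 <= b \/ 4 <= c -> 2 <= cox_trace 1 b c 4.
Proof.
have -> : cox_trace 1 b c 4 = c * (9 * b - 6) - 24 * b + 14 by rewrite /cox_trace; ring.
by move=> b_ge1 c_ge3 [] ?; nia.
Qed.

Lemma cox_trace_a1_d_ge5 (b c d : int) : 1 <= b -> 5 <= d -> 3 <= c -> 2 <= cox_trace 1 b c d.
Proof.
move=> b_ge1 d_ge5 c_ge3; rewrite /cox_trace.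
have Y_ge5 : 5 <= b * d by nia.
have W_ge : 3 * (b * d - 2) <= (1 * d - 2) * (b * d - 2) by nia.
have Q_ge0 : 0 <= 1 * ((1 * d - 2) * (b * d - 2) - 2) + b by nia.
have : 3 * (1 * ((1 * d - 2) * (b * d - 2) - 2) + b) <=
       c * (1 * ((1 * d - 2) * (b * d - 2) - 2) + b) by nia.
nia.
Qed.

(* The seven finite types (a, b, c, d) with the number of positive roots. *)
Definition finite_types : seq (nat * nat * nat * nat * nat) :=
  [:: (1, 1, 1, 1, 3); (1, 1, 3, 3, 6); (1, 2, 4, 2, 6); (1, 3, 6, 2, 12);
      (1, 4, 5, 2, 12); (1, 3, 7, 2, 18); (1, 5, 5, 2, 18)]%N.

Definition finite_witness (q : nat * nat * nat * nat) (n : nat) : bool :=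
  let: (a, b, c, d) := q in
  let m := cartan_off a b c d in
  [&& positive_chain m Ox false n, walk_negative m Oy false n,
      walk_negative m Oz false n & size (chain m Ox false n) == n].

Lemma finite_types_witness q n : (q, n) \in finite_types -> finite_witness q n.
Proof.
have /allP witnessed : all (fun t => finite_witness t.1 t.2) finite_types by vm_compute.
exact: witnessed (q, n).
Qed.

Definition idx (i : bool) : 'I_2 := if i then ord_max else ord0.

Definition vec2 (p q : int) : {ffun 'I_2 -> int} :=
  [ffun k : 'I_2 => if k == ord0 then p else q].

Lemma ord2P (P : 'I_2 -> Prop) : P ord0 -> P ord_max -> forall k, P k.
Proof.
move=> P0 P1 [[|[|k]] lt_k2] //.
- by rewrite (_ : Ordinal _ = ord0) //; apply: val_inj.
- by rewrite (_ : Ordinal _ = ord_max) //; apply: val_inj.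
Qed.

Lemma vec2_eta (v : {ffun 'I_2 -> int}) : v = vec2 (v ord0) (v ord_max).
Proof. by apply/ffunP; apply: ord2P; rewrite ffunE. Qed.

Lemma vec2_inj p q p' q' : vec2 p q = vec2 p' q' -> p = p' /\ q = q'.
Proof. by move=> /ffunP e; move: (e ord0) (e ord_max); rewrite !ffunE. Qed.

Lemma sum_ord2 (F : 'I_2 -> int) : \sum_(j < 2) F j = F ord0 + F ord_max.
Proof. by rewrite big_ord_recl big_ord1; congr (_ + F _); apply: val_inj. Qed.

Lemma vopp_vec2 p q : vopp (vec2 p q) = vec2 (- p) (- q).
Proof. by apply/ffunP; apply: ord2P; rewrite !ffunE. Qed.

Lemma nonnegE (v : {ffun 'I_2 -> int}) : nonneg v <-> nonnegb (v ord0, v ord_max).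
Proof. by split=> [v_ge0 | /andP [? ?]]; [apply/andP; split; apply: v_ge0 | apply: ord2P]. Qed.

Lemma in_cone_nonneg (v : {ffun 'I_2 -> int}) : in_cone ord0 ord_max v <-> nonneg v.
Proof.
split=> [[p [q ->]] | /nonnegE /andP [v0 v1]].
  by apply: ord2P; rewrite !ffunE /=; lia.
exists `|v ord0|%N, `|v ord_max|%N; rewrite [LHS]vec2_eta !gez0_abs //.
by apply/ffunP; apply: ord2P; rewrite !ffunE /=; ring.
Qed.

Section RootSystem.
Variables (A : Type) (x y z : A) (rho : 'I_2 -> A -> A) (C : A -> 'I_2 -> 'I_2 -> int)
  (R : A -> {ffun 'I_2 -> int} -> Prop) (a b c d : nat).
Hypotheses (rho1x : rho ord0 x = y) (rho1y : rho ord0 y = x) (rho1z : rho ord0 z = z)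
  (rho2x : rho ord_max x = x) (rho2y : rho ord_max y = z) (rho2z : rho ord_max z = y).
Hypotheses (Cx : forall i j, C x i j = cm2 a c i j) (Cy : forall i j, C y i j = cm2 a d i j)
  (Cz : forall i j, C z i j = cm2 b d i j).
Hypothesis RS : root_system rho C R.

Local Notation m := (cartan_off a b c d).

Definition elt (o : obj) : A := match o with Ox => x | Oy => y | Oz => z end.

Definition root (o : obj) (v : int * int) : Prop := R (elt o) (vec2 v.1 v.2).

Lemma rootE o (v : {ffun 'I_2 -> int}) : R (elt o) v <-> root o (v ord0, v ord_max).
Proof. by rewrite /root -vec2_eta. Qed.

Lemma rho_elt i o : rho (idx i) (elt o) = elt (rho3 i o).
Proof. by case: i; case: o. Qed.

Lemma C_elt o i j : C (elt o) (idx i) (idx j) = if i == j then 2 else - m o i.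
Proof. by case: o; case: i; case: j; rewrite /= ?Cx ?Cy ?Cz. Qed.

Lemma sigma_vec2 o i v :
  sigma C (elt o) (idx i) (vec2 v.1 v.2) = vec2 (sref m o i v).1 (sref m o i v).2.
Proof.
have C_i0 := C_elt o i false; have C_i1 := C_elt o i true.
apply/ffunP; apply: ord2P; rewrite !ffunE sum_ord2 !ffunE;
  by case: i C_i0 C_i1 => /= C_i0 C_i1; rewrite ?C_i0 ?C_i1; ring.
Qed.

Lemma alpha_simple i : alpha (idx i) = vec2 (simple i).1 (simple i).2.
Proof. by apply/ffunP; apply: ord2P; rewrite !ffunE; case: i. Qed.

Lemma root_sref o i v : root o v -> root (rho3 i o) (sref m o i v).
Proof.
case: RS => _ [_ [R3 _]] Rv; rewrite /root -rho_elt; apply/R3.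
by exists (vec2 v.1 v.2); rewrite ?sigma_vec2.
Qed.

Lemma root_sref_inv o i v : root (rho3 i o) v -> root o (sref m o i v).
Proof. by move=> /(root_sref i); rewrite rho3K /sref cartan_off_rho3. Qed.

Lemma root_simple o i : root o (simple i).
Proof.
case: RS => _ [R2 _]; rewrite /root -alpha_simple; apply/(R2 _ (idx i)); last by left.
by exists 1; apply/ffunP => k; rewrite !ffunE mul1r.
Qed.

Lemma root_axis o i v : root o v -> (if i then v.1 else v.2) = 0 ->
  v = simple i \/ v = (- (simple i).1, - (simple i).2).
Proof.
case: RS => _ [R2 _] Rv v_axis.
have v_alpha : exists k, vec2 v.1 v.2 = [ffun l => k * alpha (idx i) l].
  exists (if i then v.2 else v.1); apply/ffunP; apply: ord2P; rewrite !ffunE;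
    by case: i v_axis => /= v_axis; rewrite ?v_axis; ring.
have [] := (R2 _ _ _ v_alpha).1 Rv; rewrite alpha_simple.
  by move=> /vec2_inj [v1 v2]; left; rewrite [v]surjective_pairing v1 v2; case: (simple i).
move=> /ffunP e; right; move: (e ord0) (e ord_max).
by rewrite !ffunE /= => v1 v2; rewrite [v]surjective_pairing v1 v2.
Qed.

Lemma root_neq0 o : ~ root o (0, 0).
Proof. by move=> /(root_axis (i := false)) /(_ erefl) []. Qed.

Lemma root_sign o v : root o v -> nonnegb v || nonposb v.
Proof.
case: RS => [R1 _] /R1 [[_] | [_]] /nonnegE; rewrite !ffunE /nonnegb /nonposb /=.
  by move=> ->.
by rewrite !oppr_ge0 => ->; rewrite orbT.
Qed.

Lemma root_opp o v : root o v -> root o (- v.1, - v.2).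
Proof.
case: RS => [R1 _] Rv; rewrite /root /= -vopp_vec2.
case/orP: (root_sign Rv) => [v_ge0 | /andP [v1_le0 v2_le0]].
  by apply/R1; right; rewrite !vopp_vec2 !opprK; split=> //; apply/nonnegE; rewrite !ffunE.
case/R1: (Rv) => [[_ /nonnegE] | [] //]; rewrite !ffunE => /andP /= [v1_ge0 v2_ge0].
suff v0 : v = (0, 0) by move: Rv; rewrite v0 => /root_neq0.
by rewrite [v]surjective_pairing; congr pair; lia.
Qed.

Lemma root_sref_nonneg o i v :
  root o v -> nonnegb v -> v != simple i -> nonnegb (sref m o i v).
Proof.
move=> Rv v_ge0 v_ne.
have axis_ne0 : (if i then v.1 else v.2) != 0.
  apply/eqP => /(root_axis Rv) [v_simple | v_neg]; first by rewrite v_simple eqxx in v_ne.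
  by move: v_ge0; rewrite v_neg; case: i {v_ne v_neg}.
case/orP: (root_sign (root_sref i Rv)) => //.
by move: v_ge0 axis_ne0; rewrite /nonnegb /nonposb /sref; case: i {v_ne} => /=; lia.
Qed.

Lemma root_walk o i n v : root o v -> root (walk_obj o i n) (walk m o i n v).
Proof. by elim: n o i v => [|n IH] o i v Rv //=; apply/IH/root_sref. Qed.

Lemma root_chain o i n v : v \in chain m o i n -> root o v.
Proof.
elim: n o i v => [|n IH] o i v //=; rewrite in_cons => /orP [/eqP -> | /mapP [w w_in ->]].
  exact: root_simple.
exact/root_sref_inv/(IH _ _ _ w_in).
Qed.

Lemma chain_or_walk_nonneg o i n v : root o v -> nonnegb v ->
  v \in chain m o i n \/ nonnegb (walk m o i n v).
Proof.
elim: n o i v => [|n IH] o i v Rv v_ge0 /=; first by right.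
have [-> | v_ne] := eqVneq v (simple i); first by left; rewrite mem_head.
have [in_chain | ] := IH _ (~~ i) _ (root_sref i Rv) (root_sref_nonneg Rv v_ge0 v_ne).
  by left; rewrite in_cons -[v](srefK m o i) map_f ?orbT.
by right.
Qed.

(* A positive root off the chain stays positive along the walk, where it becomes
   a nonnegative combination of two nonpositive vectors, hence zero. *)
Lemma positive_roots_in_chain o i n v : walk_negative m o i n ->
  root o v -> nonnegb v -> v \in chain m o i n.
Proof.
move=> neg Rv v_ge0; case: (chain_or_walk_nonneg i n Rv v_ge0) => // walk_ge0.
have {}Rv := root_walk i n Rv; suff v0 : walk m o i n v = (0, 0).
  by move: Rv; rewrite v0 => /root_neq0.
rewrite [walk _ _ _ _ v]walk_linear in walk_ge0 *.
move: neg walk_ge0 v_ge0; rewrite /walk_negative /nonnegb /nonposb /lincomb /=.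
case: (walk m o i n (1, 0)) (walk m o i n (0, 1)) => [u1 u2] [w1 w2] /=.
by move=> /andP [/andP [? ?] /andP [? ?]] /andP [? ?] /andP [? ?]; congr pair; nia.
Qed.

Lemma finite_roots_at o i n : walk_negative m o i n ->
  exists s : seq {ffun 'I_2 -> int}, forall v, R (elt o) v <-> v \in s.
Proof.
move=> neg; pose pos := chain m o i n.
exists [seq vec2 v.1 v.2 | v <- pos ++ [seq (- v.1, - v.2) | v <- pos]] => v; split.
- move=> /rootE Rv; apply/mapP; exists (v ord0, v ord_max); last exact: vec2_eta.
  rewrite mem_cat; case/orP: (root_sign Rv) => [v_ge0 | v_le0].
    by rewrite positive_roots_in_chain.
  apply/orP; right; apply/mapP; exists (- v ord0, - v ord_max); last by rewrite /= !opprK.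
  apply: positive_roots_in_chain => //; first exact: root_opp Rv.
  by move: v_le0; rewrite /nonnegb /nonposb /= !oppr_ge0.
- move=> /mapP [w]; rewrite mem_cat => /orP [w_in | /mapP [u u_in ->]] ->.
    exact: root_chain w_in.
  exact: root_opp (root_chain u_in).
Qed.

Lemma card_positive_roots o i n : positive_chain m o i n ->
  card_is (fun v => R (elt o) v /\ nonneg v) (size (chain m o i n)).
Proof.
case/and3P => neg chain_ge0 chain_uniq.
exists [seq vec2 v.1 v.2 | v <- chain m o i n]; split; last by rewrite size_map.
  by rewrite map_inj_uniq // => -[p q] [p' q'] /vec2_inj /= [-> ->].
move=> v; split=> [/mapP [w w_in ->] | [/rootE Rv /nonnegE v_ge0]].
  split; first exact: root_chain w_in.
  by apply/nonnegE; rewrite !ffunE; exact: (allP chain_ge0 _ w_in).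
apply/mapP; exists (v ord0, v ord_max); last exact: vec2_eta.
exact: positive_roots_in_chain.
Qed.

Lemma walk_simple_sign o i n j :
  nonnegb (walk m o i n (simple j)) || nonposb (walk m o i n (simple j)).
Proof. exact/root_sign/root_walk/root_simple. Qed.

Lemma root_coxeter v : root Ox v -> root Ox (coxeter a b c d v).
Proof. exact: (root_walk true 6). Qed.

Lemma infinite_of_cox_trace : 2 <= a%:Z * d -> 3 <= b%:Z * d ->
  2 <= cox_trace a b c d -> ~ root_system_finite R.
Proof.
move=> ad_ge2 bd_ge3 tr_ge2 fin; have [s Rs] := fin x.
pose u j := iter j (coxeter a b c d) (1, 0).
have u_root j : root Ox (u j).
  by elim: j => [|j IH]; [exact: root_simple Ox false | exact: root_coxeter].
have u_rec j : (u j.+2).1 = cox_trace a b c d * (u j.+1).1 - (u j).1.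
  rewrite /u !iterS cayley_hamilton2 ?coxeter_traceE ?coxeter_det //.
    by rewrite /lincomb /=; ring.
  exact: walk_linear.
have u1_ge2 : 2 <= (u 1%N).1.
  have := coxeter_traceE a b c d; rewrite coxeter22.
  have : 1 <= (a%:Z * d - 1) * (b%:Z * d - 2) by nia.
  rewrite /u /=; lia.
have u_incr : forall j, (u j).1 < (u j.+1).1.
  by apply: (recurrence_increasing tr_ge2) => //; lia.
apply: (@no_injection_into_seq _ (fun j => vec2 (u j).1 (u j).2) s).
  by move=> i j /vec2_inj [uij _]; apply: (increasing_inj u_incr) uij.
by move=> j; apply/Rs; apply: u_root.
Qed.

Lemma finite_of_witness n : (forall w : A, w = x \/ w = y \/ w = z) ->
  finite_witness (a, b, c, d) n -> root_system_finite R.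
Proof.
move=> obj3 /and4P [/and3P [neg_x _ _] neg_y neg_z _] w.
case: (obj3 w) => [-> | [-> | ->]].
- exact: finite_roots_at neg_x.
- exact: finite_roots_at neg_y.
- exact: finite_roots_at neg_z.
Qed.

Lemma card_of_witness n : finite_witness (a, b, c, d) n ->
  card_is (fun v => R x v /\ nonneg v) n.
Proof. by case/and4P => pos _ _ /eqP <-; exact: card_positive_roots pos. Qed.

Section Classification.
Hypotheses (xy : x <> y) (yz : y <> z) (xz : x <> z).
Hypotheses (CS : cartan_scheme rho C) (a_le_d : (a <= d)%N) (fin : root_system_finite R).

Lemma cartan_off_eq0 o i : m o i = 0 -> m o (~~ i) = 0.
Proof.
move=> mi0; have [_ [gen _]] := CS; have [_ [_ sym0]] := gen (elt o).
move: (sym0 (idx i) (idx (~~ i))); rewrite !C_elt; case: i mi0 => /= ->;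
  by rewrite oppr0 => /(_ erefl) /eqP; rewrite oppr_eq0 => /eqP.
Qed.

Lemma elt_inj : injective elt.
Proof.
by case; case=> //= /esym e; [case: xy | case: xz | case: yz].
Qed.

Lemma iter_rho_elt k o :
  iter k (fun w => rho ord0 (rho ord_max w)) (elt o) =
  elt (iter k (fun o => rho3 false (rho3 true o)) o).
Proof. by elim: k => //= k ->; rewrite (rho_elt true) (rho_elt false). Qed.

Lemma cycle_of_positive_chain o i n : positive_chain m o i n ->
  iter (size (chain m o i n)) (fun o => rho3 false (rho3 true o)) o = o.
Proof.
move=> pos; apply: elt_inj; rewrite -iter_rho_elt.
case: RS => _ [_ [_ R4]]; apply: R4 => //.
have [s [s_uniq s_mem s_size]] := card_positive_roots pos.
exists s; split=> // v; rewrite s_mem.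
by split=> -[Rv /in_cone_nonneg v_ge0] //; split=> //; apply/in_cone_nonneg.
Qed.

Ltac refute_mixed o i n j :=
  exfalso; move: (walk_simple_sign o i n j); subst; rewrite /= /sref /nonnegb /nonposb /=; lia.

Ltac refute_cycle o i n :=
  exfalso; move: (@cycle_of_positive_chain o i n); subst; by move=> /(_ erefl).

Ltac refute_growth trace_bound :=
  exfalso; apply: (infinite_of_cox_trace _ _ _ fin); [nia | nia | subst; apply: trace_bound; nia].

Lemma a_pos : (0 < a)%N.
Proof.
case: (posnP a) => // a0.
have c0 : c = 0%N by have := @cartan_off_eq0 Ox false; rewrite /= a0 => /(_ erefl) [].
have d0 : d = 0%N by have := @cartan_off_eq0 Oy false; rewrite /= a0 => /(_ erefl) [].
have b0 : b = 0%N by have := @cartan_off_eq0 Oz true; rewrite /= d0 => /(_ erefl) [].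
refute_cycle Ox false 2%N.
Qed.

Lemma c_pos : (0 < c)%N.
Proof.
case: (posnP c) => // c0.
have := @cartan_off_eq0 Ox true; rewrite /= c0 => /(_ erefl) [a0].
by move: a_pos; rewrite a0.
Qed.

Lemma b_pos : (0 < b)%N.
Proof.
case: (posnP b) => // b0.
have := @cartan_off_eq0 Oz false; rewrite /= b0 => /(_ erefl) [d0].
by move: a_le_d a_pos; rewrite d0 leqn0 => /eqP ->.
Qed.

Lemma a_eq1 : a = 1%N.
Proof.
have a_ge1 := a_pos; have b_ge1 := b_pos; have c_ge1 := c_pos.
have [a_ge3 | [a2 | //]] : (3 <= a \/ a = 2 \/ a = 1)%N by lia.
  by refute_growth cox_trace_a_ge3.
have [c1 | c_ge2] : (c = 1 \/ 2 <= c)%N by lia.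
  by refute_mixed Oz true 4%N false.
have [[b1 d2] | [[b_ge2 d_ge2] | [b1 d_ge3]]] :
      ((b = 1 /\ d = 2) \/ (2 <= b /\ 2 <= d) \/ (b = 1 /\ 3 <= d))%N by lia.
- by refute_mixed Ox false 4%N true.
- by refute_growth cox_trace_a2.
- by refute_growth cox_trace_a2_b1.
Qed.

Lemma exclude_c1 : c = 1%N -> (2 <= d)%N -> False.
Proof. by move=> c1 d_ge2; have a1 := a_eq1; refute_mixed Oz true 3%N false. Qed.

Lemma exclude_c2 : c = 2%N -> (3 <= d)%N -> False.
Proof. by move=> c2 d_ge3; have a1 := a_eq1; refute_mixed Oz true 4%N false. Qed.

Lemma classify_d1 : d = 1%N -> (a, b, c, d) \in map fst finite_types.
Proof.
move=> d1; have a1 := a_eq1; have b_ge1 := b_pos; have c_ge1 := c_pos.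
have [c_ge2 | c1] : (2 <= c \/ c = 1)%N by lia.
  by refute_mixed Ox true 3%N false.
have [b_ge2 | b1] : (2 <= b \/ b = 1)%N by lia.
  by refute_mixed Oz false 3%N true.
by subst.
Qed.

Lemma classify_d2_c_le4 : d = 2%N -> (c <= 4)%N -> (a, b, c, d) \in map fst finite_types.
Proof.
move=> d2 c_le4; have a1 := a_eq1; have b_ge1 := b_pos; have c_ge1 := c_pos.
have [c1 | [c2 | [c3 | c4]]] : (c = 1 \/ c = 2 \/ c = 3 \/ c = 4)%N by lia.
- by case: (exclude_c1 c1); rewrite d2.
- have [b1 | b_ge2] : (b = 1 \/ 2 <= b)%N by lia.
    by refute_cycle Ox false 4%N.
  by refute_mixed Oz false 4%N true.
- have [b1 | [b2 | b_ge3]] : (b = 1 \/ b = 2 \/ 3 <= b)%N by lia.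
  + by refute_mixed Ox true 4%N false.
  + by refute_mixed Oy true 5%N false.
  + by refute_mixed Oz false 5%N true.
- have [b1 | [b2 | b_ge3]] : (b = 1 \/ b = 2 \/ 3 <= b)%N by lia.
  + by refute_mixed Ox true 4%N false.
  + by subst.
  + by refute_mixed Oz false 6%N true.
Qed.

Lemma classify_d2_c_ge5 : d = 2%N -> (5 <= c)%N -> (a, b, c, d) \in map fst finite_types.
Proof.
move=> d2 c_ge5; have a1 := a_eq1; have b_ge1 := b_pos.
have [b1 | [b2 | [b3 | [b4 | [b5 | b_ge6]]]]] :
    (b = 1 \/ b = 2 \/ b = 3 \/ b = 4 \/ b = 5 \/ 6 <= b)%N by lia.
- by refute_mixed Ox true 4%N false.
- by refute_mixed Ox true 6%N false.
- have [c5 | [c6 | [c7 | c_ge8]]] : (c = 5 \/ c = 6 \/ c = 7 \/ 8 <= c)%N by lia.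
  + by refute_mixed Oy true 8%N false.
  + by subst.
  + by subst.
  + by refute_growth cox_trace_a1_d2.
- have [c5 | c_ge6] : (c = 5 \/ 6 <= c)%N by lia.
    by subst.
  by refute_growth cox_trace_a1_d2.
- have [c5 | c_ge6] : (c = 5 \/ 6 <= c)%N by lia.
    by subst.
  by refute_growth cox_trace_a1_d2.
- by refute_growth cox_trace_a1_d2.
Qed.

Lemma classify_d3 : d = 3%N -> (a, b, c, d) \in map fst finite_types.
Proof.
move=> d3; have a1 := a_eq1; have b_ge1 := b_pos; have c_ge1 := c_pos.
have [c1 | [c2 | [c3 | c_ge4]]] : (c = 1 \/ c = 2 \/ c = 3 \/ 4 <= c)%N by lia.
- by case: (exclude_c1 c1); rewrite d3.
- by case: (exclude_c2 c2); rewrite d3.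
- have [b1 | b_ge2] : (b = 1 \/ 2 <= b)%N by lia.
    by subst.
  by refute_mixed Oz false 6%N true.
- have [b1 | b_ge2] : (b = 1 \/ 2 <= b)%N by lia.
    by refute_mixed Ox true 6%N false.
  by refute_growth cox_trace_a1_d3.
Qed.

Lemma exclude_d_ge4 : (4 <= d)%N -> False.
Proof.
move=> d_ge4; have a1 := a_eq1; have b_ge1 := b_pos; have c_ge1 := c_pos.
have [c1 | [c2 | c_ge3]] : (c = 1 \/ c = 2 \/ 3 <= c)%N by lia.
- by apply: exclude_c1 => //; lia.
- by apply: exclude_c2 => //; lia.
have [d_ge5 | d4] : (5 <= d \/ d = 4)%N by lia.
  by refute_growth cox_trace_a1_d_ge5.
have [[b1 c3] | b_or_c] : ((b = 1 /\ c = 3) \/ (2 <= b \/ 4 <= c))%N by lia.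
  by refute_mixed Oy true 8%N false.
by refute_growth cox_trace_a1_d4.
Qed.

Lemma finite_type_params : (a, b, c, d) \in map fst finite_types.
Proof.
have d_ge1 : (1 <= d)%N by rewrite -a_eq1.
have [d1 | [d2 | [d3 | d_ge4]]] : (d = 1 \/ d = 2 \/ d = 3 \/ 4 <= d)%N by lia.
- exact: classify_d1.
- have [c_le4 | c_ge5] := leqP c 4; first exact: classify_d2_c_le4.
  exact: classify_d2_c_ge5.
- exact: classify_d3.
- by case: (exclude_d_ge4 d_ge4).
Qed.
End Classification.
End RootSystem.

Theorem theorem6p1 (A : Type) (x y z : A)
  (rho : 'I_2 -> A -> A) (C : A -> 'I_2 -> 'I_2 -> int)
  (R : A -> {ffun 'I_2 -> int} -> Prop) (a b c d : nat) :
  x <> y -> y <> z -> x <> z ->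
  (forall w : A, w = x \/ w = y \/ w = z) ->
  cartan_scheme rho C ->
  rho ord0 x = y -> rho ord0 y = x -> rho ord0 z = z ->
  rho ord_max x = x -> rho ord_max y = z -> rho ord_max z = y ->
  (a <= d)%N ->
  (forall i j, C x i j = cm2 a c i j) ->
  (forall i j, C y i j = cm2 a d i j) ->
  (forall i j, C z i j = cm2 b d i j) ->
  root_system rho C R ->
  (root_system_finite R ->
     (  (a, b, c, d) = (1, 1, 1, 1)%N /\ card_is (fun v => R x v /\ nonneg v) 3 \/
         (a, b, c, d) = (1, 1, 3, 3)%N /\ card_is (fun v => R x v /\ nonneg v) 6 \/
         (a, b, c, d) = (1, 2, 4, 2)%N /\ card_is (fun v => R x v /\ nonneg v) 6 \/
         (a, b, c, d) = (1, 3, 6, 2)%N /\ card_is (fun v => R x v /\ nonneg v) 12 \/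
         (a, b, c, d) = (1, 4, 5, 2)%N /\ card_is (fun v => R x v /\ nonneg v) 12 \/
         (a, b, c, d) = (1, 3, 7, 2)%N /\ card_is (fun v => R x v /\ nonneg v) 18 \/
         (a, b, c, d) = (1, 5, 5, 2)%N /\ card_is (fun v => R x v /\ nonneg v) 18))
  /\
  ((a, b, c, d) \in [:: (1, 1, 1, 1); (1, 1, 3, 3); (1, 2, 4, 2); (1, 3, 6, 2);
                        (1, 4, 5, 2); (1, 3, 7, 2); (1, 5, 5, 2)]%N ->
   root_system_finite R).
Proof.
move=> xy yz xz obj3 CS rho1x rho1y rho1z rho2x rho2y rho2z a_le_d Cx Cy Cz RS.
split=> [fin | q_in].
- have /mapP [[q n] qn /= q_eq] := finite_type_params rho1x rho1y rho1z rho2x rho2y rho2z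
    Cx Cy Cz RS xy yz xz CS a_le_d fin.
  subst q; have card := card_of_witness rho1x rho1y rho1z rho2x rho2y rho2z Cx Cy Cz RS
    (finite_types_witness qn).
  move: qn card; rewrite !inE.
  move=> /orP [E | /orP [E | /orP [E | /orP [E | /orP [E | /orP [E | E]]]]]];
    case/eqP: E => -> -> -> -> ->; do ![by left | right]; done.
- have /mapP [[q n] qn /= q_eq] : (a, b, c, d) \in map fst finite_types := q_in.
  subst q; apply: (finite_of_witness rho1x rho1y rho1z rho2x rho2y rho2z Cx Cy Cz RS obj3).
  exact: finite_types_witness qn.
Qed.
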